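(* Let $M$ be a matroid with lattice of flats $L$ and rank function giving $r_{FG}=\operatorname{rk}G-\operatorname{rk}F$, and consider the weakly ranked poset $(L,2r)$. Define $\kappa\in\mathscr{I}(L,2r)$ by $$\kappa_{FH}(t):=(t-1)^{r_{FH}}\sum_{F\le G\le H}(-1)^{r_{FG}}\chi_{FG}(-1)\chi_{GH}(t),$$ and $h^{\mathrm{bc}}\in\mathscr{I}_{1/2}(L,2r)$ by $h^{\mathrm{bc}}_{FG}(t):=(-t)^{r_{FG}}\chi_{FG}(1-t^{-1})$. Then $\kappa$ is an $(L,2r)$-kernel, and $h^{\mathrm{bc}}$ is its left KLS-function.
   Context: For a locally finite poset $P$ with weak rank function $\rho$ (integers $\rho_{xy}$ for $x\le y$, positive for $x<y$, additive: $\rho_{xy}+\rho_{yz}=\rho_{xz}$): $I(P)=\prod_{x\le y}\mathbb{Z}[t]$ is a ring under convolution $(fg)_{xz}=\sum_{x\le y\le z}f_{xy}g_{yz}$; $\mathscr{I}(P,\rho)$ is the subring of $f$ with $\deg f_{xy}\le\rho_{xy}$, with involution $\bar f_{xy}(t)=t^{\rho_{xy}}f_{xy}(t^{-1})$; $\mathscr{I}_{1/2}(P,\rho)$ consists of $f\in\mathscr{I}(P,\rho)$ with $f_{xx}=1$ and $\deg f_{xy}<\rho_{xy}/2$ for $x<y$. A $(P,\rho)$-kernel is $\kappa\in\mathscr{I}(P,\rho)$ with $\kappa_{xx}=1$ and $\kappa^{-1}=\bar\kappa$; its left KLS-function is the unique $g\in\mathscr{I}_{1/2}(P,\rho)$ with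 $\bar g=g\kappa$. Here $(L,2r)$ means $L$ (ordered by inclusion) with weak rank function $\rho=2r$. The characteristic function is $\chi_{FG}(t)=\sum_{F\le E\le G}\mu_{FE}\,t^{r_{EG}}$, where $\mu$ is the Möbius function of $L$ (the inverse in $I(L)$ of the all-ones function $\zeta$). *)

From HB Require Import structures.
From mathcomp Require Import all_boot all_order all_algebra.
Set Implicit Arguments. Unset Strict Implicit. Unset Printing Implicit Defensive.
Import GRing.Theory Num.Theory.
Local Open Scope ring_scope.

Record matroid (T : finType) := Matroid {
  mrank : {set T} -> nat;
  mrank_card : forall A, (mrank A <= #|A|)%N;
  mrank_mono : forall A B : {set T}, A \subset B -> (mrank A <= mrank B)%N;
  mrank_submod : forall A B : {set T},
      (mrank (A :|: B) + mrank (A :&: B) <= mrank A + mrank B)%N }.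

Section Matroid.
Variables (T : finType) (M : matroid T).

Definition is_flat (F : {set T}) : bool :=
  [forall e, (e \notin F) ==> (mrank M F < mrank M (e |: F))%N].

Definition flat_le (F G : {set T}) : bool := [&& is_flat F, is_flat G & F \subset G].

Definition rr (F G : {set T}) : nat := (mrank M G - mrank M F)%N.

(* Elements of I(L) : functions on pairs F <= G with values in Z[t]
   (values on other pairs are irrelevant). *)
Definition incid := {set T} -> {set T} -> {poly int}.

Definition conv (f g : incid) : incid := fun F H =>
  \sum_(G : {set T} | flat_le F G && flat_le G H) f F G * g G H.

Definition delta : incid := fun F H => (F == H)%:R.

Definition ieq (f g : incid) : Prop := forall F G, flat_le F G -> f F G = g F G.

(* Möbius function of L, by the standard recursion mu * zeta = delta
   (with fuel n >= #|G|). *)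
Fixpoint mob_aux (n : nat) (F G : {set T}) : int :=
  if F == G then 1 else
  match n with
  | 0 => 0
  | n'.+1 => if flat_le F G then
               - \sum_(E : {set T} | flat_le F E && flat_le E G && (E != G)) mob_aux n' F E
             else 0
  end.
Definition mobius (F G : {set T}) : int := mob_aux #|G| F G.

Definition chi : incid := fun F G =>
  \sum_(E : {set T} | flat_le F E && flat_le E G) (mobius F E)%:~R *: 'X^(rr E G).

(* For a polynomial p of degree <= n:  t^n p(t^{-1})  *)
Definition recip_poly (n : nat) (p : {poly int}) : {poly int} :=
  \sum_(i < n.+1) p`_i *: 'X^(n - i).

(* For a polynomial p of degree <= n:  t^n p(1 - t^{-1}) *)
Definition homog_one_minus_inv (n : nat) (p : {poly int}) : {poly int} :=
  \sum_(i < n.+1) p`_i *: (('X - 1) ^+ i * 'X^(n - i)).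

Definition rho (F G : {set T}) : nat := (2 * rr F G)%N.
Definition ibar (f : incid) : incid := fun F G => recip_poly (rho F G) (f F G).

Definition in_Irho (f : incid) : Prop :=
  forall F G, flat_le F G -> (size (f F G) <= (rho F G).+1)%N.

(* f in I_{1/2}(L, 2r): f_FF = 1 and deg f_FG < rho_FG / 2 = r_FG for F < G *)
Definition in_Ihalf (f : incid) : Prop :=
  [/\ in_Irho f,
      (forall F, is_flat F -> f F F = 1) &
      (forall F G, flat_le F G -> F != G -> (size (f F G) <= rr F G)%N)].

Definition is_kernel (k : incid) : Prop :=
  [/\ in_Irho k,
      (forall F, is_flat F -> k F F = 1),
      ieq (conv k (ibar k)) delta &
      ieq (conv (ibar k) k) delta].

Definition is_left_KLS (k g : incid) : Prop :=
  [/\ in_Ihalf g,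
      ieq (ibar g) (conv g k) &
      (forall g', in_Ihalf g' -> ieq (ibar g') (conv g' k) -> ieq g' g)].

Definition kappa_mat : incid := fun F H =>
  ('X - 1) ^+ rr F H *
  \sum_(G : {set T} | flat_le F G && flat_le G H)
     ((-1) ^+ rr F G * (chi F G).[-1]) *: chi G H.

Definition hbc : incid := fun F G =>
  (-1) ^+ rr F G *: homog_one_minus_inv (rr F G) (chi F G).

End Matroid.

(* Write Z_a := (a^{r_FG}) and M_a := (mu_FG a^{r_FG}) for a in Z[t].  Because r
   is additive, f |-> (a^{r_FG} f_FG) is multiplicative on I(L), so M_a and Z_a are
   inverse to each other for every a.  Expanding the definitions gives
   chi = M_1 Z_t, kappa = M_{1-t} Z_{t(t-1)} and h^bc = M_{-t} Z_{1-t}, and the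
   involution acts on M_a Z_b through a |-> t^2 a(1/t), b |-> t^2 b(1/t), which fixes
   -t and swaps 1-t and t(t-1).  Hence kappa bar(kappa) = M_{1-t} Z_{1-t} = 1,
   bar(kappa) kappa = 1 and h^bc kappa = M_{-t} Z_{t(t-1)} = bar(h^bc).  The
   coefficient of t^r in h^bc_FG is (-1)^r chi_FG(1) = (-1)^r sum mu_FE = 0 for F < G,
   so h^bc lies in I_{1/2}; uniqueness is the usual triangularity argument: the
   difference d of two solutions satisfies bar(d_FG) = d_FG with deg d_FG < r_FG. *)

From HB Require Import structures.
From Pilot Require Import Defs.
From mathcomp Require Import all_boot all_order all_algebra.
From mathcomp Require Import ring zify.
Set Implicit Arguments. Unset Strict Implicit. Unset Printing Implicit Defensive.
Import GRing.Theory.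
Local Open Scope ring_scope.

Section CoefCombination.
Variables (R : nzRingType) (V : lmodType R) (n : nat) (B : nat -> V).

Definition coef_comb (p : {poly R}) : V := \sum_(i < n.+1) p`_i *: B i.

Lemma coef_comb_is_linear : linear coef_comb.
Proof.
move=> c p q; rewrite /coef_comb scaler_sumr -big_split.
by apply: eq_bigr => i _; rewrite coefD coefZ scalerDl scalerA.
Qed.

Lemma coef_comb_Xn k : (k <= n)%N -> coef_comb 'X^k = B k.
Proof.
move=> hk; rewrite /coef_comb (bigD1 (Ordinal (hk : k < n.+1)%N)) //= coefXn eqxx.
rewrite scale1r big1 ?addr0 // => i; rewrite -val_eqE coefXn /= => /negbTE ->.
exact: scale0r.
Qed.

End CoefCombination.

HB.instance Definition _ n := GRing.isLinear.Build int {poly int} {poly int} _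
  (recip_poly n) (@coef_comb_is_linear _ _ n (fun i => 'X^(n - i))).
HB.instance Definition _ n := GRing.isLinear.Build int {poly int} {poly int} _
  (homog_one_minus_inv n)
  (@coef_comb_is_linear _ _ n (fun i => ('X - 1) ^+ i * 'X^(n - i))).

Lemma recip_Xn n k : (k <= n)%N -> recip_poly n 'X^k = 'X^(n - k).
Proof. exact: (@coef_comb_Xn _ _ n (fun i => 'X^(n - i))). Qed.

Lemma homog_Xn n k : (k <= n)%N ->
  homog_one_minus_inv n 'X^k = ('X - 1) ^+ k * 'X^(n - k).
Proof. exact: (@coef_comb_Xn _ _ n (fun i => ('X - 1) ^+ i * 'X^(n - i))). Qed.

Lemma recip_polyE n (p : {poly int}) : recip_poly n p = \poly_(i < n.+1) p`_(n - i).
Proof.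
rewrite poly_def /recip_poly (reindex_inj rev_ord_inj) /=.
by apply: eq_bigr => i _; rewrite subSS subKn // -ltnS.
Qed.

Lemma self_recip_eq0 r (d : {poly int}) :
  (size d <= r)%N -> recip_poly (2 * r) d = d -> d = 0.
Proof.
move=> /leq_sizeP d_hi fix_d; apply/polyP => i; rewrite coef0.
have [ltir | leri] := ltnP i r; last exact: d_hi.
have := congr1 (fun p : {poly int} => p`_(2 * r - i)) fix_d.
rewrite /= recip_polyE coef_poly ifT; last lia.
rewrite subKn; last lia.
by move=> ->; apply: d_hi; lia.
Qed.

Lemma poly_sum_coef (R : nzSemiRingType) n (p : {poly R}) : (size p <= n)%N ->
  p = \sum_(i < n) p`_i *: 'X^i.
Proof.
move=> hp; rewrite -poly_def; apply/polyP => i; rewrite coef_poly.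
by case: ltnP => // /(leq_trans hp) /leq_sizeP ->.
Qed.

Lemma size_exp_leq (R : nzSemiRingType) (p : {poly R}) m k : (size p <= m.+1)%N ->
  (size (p ^+ k) <= (k * m).+1)%N.
Proof.
move=> hp; apply: leq_trans (size_poly_exp_leq _ _) _.
by rewrite ltnS mulnC leq_mul2l; apply/orP; right; lia.
Qed.

Lemma recip_mul m n (p q : {poly int}) :
  (size p <= m.+1)%N -> (size q <= n.+1)%N ->
  recip_poly (m + n) (p * q) = recip_poly m p * recip_poly n q.
Proof.
move=> hp hq; rewrite (poly_sum_coef hp) (poly_sum_coef hq) mulr_suml !raddf_sum.
rewrite mulr_suml; apply: eq_bigr => i _; rewrite mulr_sumr raddf_sum mulr_sumr.
apply: eq_bigr => j _; have [le_im le_jn] : (i <= m /\ j <= n)%N by split; rewrite -ltnS.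
rewrite /= -scalerAl -scalerAr -exprD !linearZ /= !recip_Xn ?leq_add //.
by rewrite -scalerAl -scalerAr -exprD; congr (_ *: (_ *: 'X^_)); lia.
Qed.

Lemma recip_exp m k (p : {poly int}) : (size p <= m.+1)%N ->
  recip_poly (k * m) (p ^+ k) = recip_poly m p ^+ k.
Proof.
move=> hp; elim: k => [|k IH]; first by rewrite !expr0 -(expr0 'X) recip_Xn.
by rewrite mulSn !exprS recip_mul ?IH ?size_exp_leq.
Qed.

Lemma recip2_NX : recip_poly 2 (- 'X) = - 'X.
Proof. by rewrite raddfN /= -(expr1 'X) recip_Xn. Qed.

Lemma recip2_1subX : recip_poly 2 (1 - 'X) = 'X * ('X - 1).
Proof.
rewrite raddfB /= -(expr0 'X) -{2}(expr1 'X) !recip_Xn //=.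
by rewrite expr1 expr0 mulrBr mulr1 -expr2.
Qed.

Lemma recip2_XXsub1 : recip_poly 2 ('X * ('X - 1)) = 1 - 'X.
Proof.
by rewrite mulrBr mulr1 -expr2 raddfB /= -{2}(expr1 'X) !recip_Xn //=.
Qed.

Lemma size_NX : (size (- 'X : {poly int}) <= 2)%N.
Proof. by rewrite size_polyN size_polyX. Qed.

Lemma size_1subX : (size (1 - 'X : {poly int})%R <= 2)%N.
Proof. by rewrite -opprB size_polyN -polyC1 size_XsubC. Qed.

Lemma size_XXsub1 : (size ('X * ('X - 1) : {poly int})%R <= 3)%N.
Proof.
by rewrite -polyC1 size_mul ?polyX_eq0 -?size_poly_eq0 ?size_polyX ?size_XsubC.
Qed.

Lemma coef_XsubC_exp_top (R : nzRingType) n : (('X - 1) ^+ n : {poly R})`_n = 1.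
Proof.
have := monic_exp n (monicXsubC (1 : R)).
by rewrite monicE /lead_coef size_exp_XsubC => /eqP.
Qed.

Lemma coef_homog_top r (p : {poly int}) : (size p <= r.+1)%N ->
  (homog_one_minus_inv r p)`_r = p.[1].
Proof.
move=> hp; rewrite {2}(poly_sum_coef hp) horner_sum coef_sum.
apply: eq_bigr => i _; rewrite coefZ hornerZ hornerXn expr1n mulr1 coefMXn.
by rewrite ltnNge leq_subr /= subKn ?coef_XsubC_exp_top ?mulr1 // -ltnS.
Qed.

Lemma sign_XsubC_exp (i j : nat) :
  (-1) ^+ (i + j) *: (('X - 1) ^+ j * 'X^i) = (- 'X) ^+ i * (1 - 'X) ^+ j :> {poly int}.
Proof.
rewrite -[1 - 'X]opprB [(- 'X) ^+ _]exprNn [(- ('X - 1)) ^+ _]exprNn.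
by rewrite -mul_polyC rmorphXn rmorphN1 exprD; ring.
Qed.

Lemma size_le_coef (R : nzSemiRingType) (p : {poly R}) n :
  (size p <= n.+1)%N -> p`_n = 0 -> (size p <= n)%N.
Proof.
move=> hp pn0; apply/leq_sizeP => j; rewrite leq_eqVlt => /predU1P[<- // | ltnj].
exact: (leq_sizeP _ _ hp).
Qed.

Section FlatLattice.
Variables (T : finType) (M : matroid T).

Local Notation le := (flat_le M).
Local Notation rr := (rr M).
Local Notation conv := (conv M).
Local Notation ieq := (ieq M).
Local Notation delta := (@delta T).

Lemma flat_le_refl F : is_flat M F -> le F F.
Proof. by move=> hF; rewrite /flat_le hF subxx. Qed.

Lemma flat_le_trans F G H : le F G -> le G H -> le F H.
Proof.
case/and3P=> hF _ sFG /and3P[_ hH sGH]; rewrite /flat_le hF hH.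
exact: subset_trans sFG sGH.
Qed.

Lemma flat_le_anti F G : le F G -> le G F -> F = G.
Proof. by case/and3P=> _ _ sFG /and3P[_ _ sGF]; apply/eqP; rewrite eqEsubset sFG. Qed.

Lemma flat_le_flatl F G : le F G -> is_flat M F.
Proof. by case/and3P. Qed.

Lemma flat_le_flatr F G : le F G -> is_flat M G.
Proof. by case/and3P. Qed.

Lemma flat_le_card F G : le F G -> (#|F| <= #|G|)%N.
Proof. by case/and3P=> _ _ /subset_leq_card. Qed.

Lemma flat_lt_card F G : le F G -> F != G -> (#|F| < #|G|)%N.
Proof. by case/and3P=> _ _ sFG nFG; apply: proper_card; rewrite properEneq nFG. Qed.

Lemma flat_subinterval_card F F' H' H :
  le F F' -> le F' H' -> le H' H -> (F' != F) || (H' != H) ->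
  (#|H'| - #|F'| < #|H| - #|F|)%N.
Proof.
move=> le1 le2 le3; rewrite eq_sym.
have := flat_le_card le1; have := flat_le_card le2; have := flat_le_card le3.
by move=> + + + /orP[/(flat_lt_card le1) | /(flat_lt_card le3)]; lia.
Qed.

Lemma flat_interval_ind (P : {set T} -> {set T} -> Prop) :
  (forall F H, le F H ->
     (forall F' H', le F F' -> le F' H' -> le H' H -> (F' != F) || (H' != H) ->
        P F' H') ->
     P F H) ->
  forall F H, le F H -> P F H.
Proof.
move=> IH; suff ind n F H : le F H -> (#|H| - #|F| <= n)%N -> P F H.
  by move=> F H le_FH; apply: ind le_FH (leqnn _).
elim: n F H => [|n IHn] F H le_FH le_n; apply: IH le_FH _ => F' H' le1 le2 le3 neq.
all: have := flat_subinterval_card le1 le2 le3 neq.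
- by move: le_n; lia.
- by move=> shrink; apply: IHn le2 _; lia.
Qed.

Lemma rr_add F G H : le F G -> le G H -> (rr F G + rr G H)%N = rr F H.
Proof.
case/and3P=> _ _ sFG /and3P[_ _ sGH]; rewrite /Defs.rr.
by have := mrank_mono M sFG; have := mrank_mono M sGH; lia.
Qed.

Lemma rrxx F : rr F F = 0%N.
Proof. exact: subnn. Qed.

Lemma flat_interval1 F E : is_flat M F -> (le F E && le E F) = (E == F).
Proof.
move=> hF; apply/idP/eqP => [/andP[h1 h2] | ->]; first exact: flat_le_anti h2 h1.
by rewrite flat_le_refl.
Qed.

Lemma mob_aux_fuel n m (F G : {set T}) : (#|G| <= n)%N -> (#|G| <= m)%N ->
  mob_aux M n F G = mob_aux M m F G.
Proof.
elim: n m G => [|n IH] [|m] G //= le_n le_m; case: eqP => // /eqP nFG.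
all: case le_FG: (le F G) => //; have := flat_lt_card le_FG nFG; try lia.
move=> _; congr (- _); apply: eq_bigr => E /andP[/andP[_ le_EG] nEG].
by have := flat_lt_card le_EG nEG => lt; apply: IH; lia.
Qed.

Lemma mobiusxx F : mobius M F F = 1.
Proof. by rewrite /mobius; case: #|F| => /=; rewrite eqxx. Qed.

Lemma mobius_rec F G : le F G -> F != G ->
  mobius M F G = - \sum_(E | le F E && le E G && (E != G)) mobius M F E.
Proof.
move=> le_FG nFG; rewrite /mobius; have := flat_lt_card le_FG nFG.
case def_n: #|G| => [|n] //= _; rewrite (negbTE nFG) le_FG; congr (- _).
apply: eq_bigr => E /andP[/andP[_ le_EG] nEG].
by apply: mob_aux_fuel => //; have := flat_lt_card le_EG nEG; rewrite def_n.
Qed.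

Lemma sum_mobius F G : le F G ->
  \sum_(E | le F E && le E G) mobius M F E = (F == G)%:R.
Proof.
move=> le_FG; have [<- | nFG] := eqVneq F G.
  rewrite (big_pred1 F) ?mobiusxx // => E.
  by rewrite /= flat_interval1 ?(flat_le_flatl le_FG).
rewrite (bigD1 G) /=; last by rewrite le_FG flat_le_refl ?(flat_le_flatr le_FG).
by rewrite (mobius_rec le_FG nFG) addNr.
Qed.

Lemma conv_assoc (f g h : incid T) : conv (conv f g) h =2 conv f (conv g h).
Proof.
move=> F H; rewrite /Defs.conv.
under eq_bigr do rewrite big_distrl.
rewrite (exchange_big_dep (fun G1 => le F G1 && le G1 H)) /=; last first.
  by move=> G2 G1 /andP[_ le_2H] /andP[-> le_12]; rewrite (flat_le_trans le_12 le_2H).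
apply: eq_bigr => G1 /andP[le_F1 le_1H]; rewrite big_distrr /=.
apply: eq_big => [G2 | G2 _]; last by rewrite mulrA.
apply/idP/idP => [/andP[/andP[_ ->] /andP[_ ->]] // | /andP[le_12 le_2H]].
by rewrite (flat_le_trans le_F1 le_12) le_2H le_F1 le_12.
Qed.

Lemma ieq_refl (f : incid T) : ieq f f.
Proof. by []. Qed.

Lemma conv_ieq (f f' g g' : incid T) : ieq f f' -> ieq g g' -> conv f g =2 conv f' g'.
Proof. by move=> ef eg F H; apply: eq_bigr => G /andP[le_FG le_GH]; rewrite ef ?eg. Qed.

Lemma ibar_ieq (f g : incid T) : ieq f g -> ieq (ibar M f) (ibar M g).
Proof. by move=> e F H le_FH; rewrite /ibar e. Qed.

Lemma conv1f (f : incid T) : ieq (conv delta f) f.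
Proof.
move=> F H le_FH; rewrite /Defs.conv (bigD1 F) /=; last first.
  by rewrite le_FH flat_le_refl ?(flat_le_flatl le_FH).
rewrite /delta eqxx mul1r big1 ?addr0 // => G /andP[_ nGF].
by rewrite eq_sym (negbTE nGF) mul0r.
Qed.

Lemma convf1 (f : incid T) : ieq (conv f delta) f.
Proof.
move=> F H le_FH; rewrite /Defs.conv (bigD1 H) /=; last first.
  by rewrite le_FH flat_le_refl ?(flat_le_flatr le_FH).
rewrite /delta eqxx mulr1 big1 ?addr0 // => G /andP[_ nGH].
by rewrite (negbTE nGH) mulr0.
Qed.

Lemma conv_diag (f g : incid T) F : is_flat M F -> conv f g F F = f F F * g F F.
Proof.
by move=> hF; rewrite /Defs.conv (big_pred1 F) // => E; rewrite /= flat_interval1.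
Qed.

Lemma conv_unitriangular_inj (u d d' : incid T) : (forall F, is_flat M F -> u F F = 1) ->
  ieq (conv u d) (conv u d') -> ieq d d'.
Proof.
move=> u1 eq_ud; apply: flat_interval_ind => F H le_FH IH.
have hF := flat_le_flatl le_FH; have inF : le F F && le F H by rewrite flat_le_refl.
have := eq_ud F H le_FH; rewrite /Defs.conv (bigD1 F inF) [in RHS](bigD1 F inF) /=.
rewrite u1 // !mul1r; set S := bigop _ _ _; set S' := bigop _ _ _.
suff -> : S = S' by apply: addIr.
apply: eq_bigr => G /andP[/andP[le_FG le_GH] nGF].
by rewrite IH ?flat_le_refl ?(flat_le_flatr le_FH) ?nGF.
Qed.

Definition scale_rank (a : {poly int}) (f : incid T) : incid T :=
  fun F G => a ^+ rr F G * f F G.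

Definition zeta : incid T := fun _ _ => 1.
Definition mu : incid T := fun F G => (mobius M F G)%:P.
Definition zeta_at a := scale_rank a zeta.
Definition mu_at a := scale_rank a mu.

Lemma scale_rankM a b f : scale_rank a (scale_rank b f) =2 scale_rank (a * b) f.
Proof. by move=> F G; rewrite /scale_rank mulrA exprMn. Qed.

Lemma scale_rank_delta a : scale_rank a delta =2 delta.
Proof.
move=> F G; rewrite /scale_rank /delta.
by case: eqP => [-> | _]; rewrite ?rrxx ?mulr0 ?mul1r.
Qed.

Lemma conv_scale_rank a f g :
  ieq (conv (scale_rank a f) (scale_rank a g)) (scale_rank a (conv f g)).
Proof.
move=> F H le_FH; rewrite /Defs.conv /scale_rank mulr_sumr.
apply: eq_bigr => G /andP[le_FG le_GH].
by rewrite -(rr_add le_FG le_GH) exprD mulrACA.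
Qed.

Lemma mu_zeta : ieq (conv mu zeta) delta.
Proof.
move=> F G le_FG; rewrite /Defs.conv /mu /zeta.
under eq_bigr do rewrite mulr1.
by rewrite -rmorph_sum /= sum_mobius // /delta; case: (F == G).
Qed.

(* [mobius] is defined as a left inverse of zeta; cancel the unitriangular mu. *)
Lemma zeta_mu : ieq (conv zeta mu) delta.
Proof.
apply: (@conv_unitriangular_inj mu) => [F _ | F H le_FH]; first by rewrite /mu mobiusxx.
rewrite -conv_assoc (conv_ieq mu_zeta (ieq_refl _)).
by rewrite conv1f // convf1.
Qed.

Lemma mu_zeta_at a : ieq (conv (mu_at a) (zeta_at a)) delta.
Proof.
move=> F H le_FH; rewrite conv_scale_rank // -(scale_rank_delta a F H).
by rewrite /scale_rank mu_zeta.
Qed.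

Lemma zeta_mu_at a : ieq (conv (zeta_at a) (mu_at a)) delta.
Proof.
move=> F H le_FH; rewrite conv_scale_rank // -(scale_rank_delta a F H).
by rewrite /scale_rank zeta_mu.
Qed.

Lemma conv_mu_zeta_cancel a b c :
  ieq (conv (conv (mu_at a) (zeta_at b)) (conv (mu_at b) (zeta_at c)))
      (conv (mu_at a) (zeta_at c)).
Proof.
move=> F H le_FH.
transitivity (conv (mu_at a) (conv delta (zeta_at c)) F H).
  rewrite conv_assoc; apply: conv_ieq => // G1 G2 le_12.
  by rewrite -conv_assoc (conv_ieq (zeta_mu_at b) (ieq_refl _)).
exact: conv_ieq (ieq_refl _) (conv1f _) F H.
Qed.

Lemma conv_mu_zetaE a b F H : conv (mu_at a) (zeta_at b) F H =
  \sum_(G | le F G && le G H) mobius M F G *: (a ^+ rr F G * b ^+ rr G H).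
Proof.
apply: eq_bigr => G _; rewrite /mu_at /zeta_at /scale_rank /mu /zeta mulr1.
by rewrite -mul_polyC mulrCA mulrA.
Qed.

Lemma ibar_conv_mu_zeta (a b : {poly int}) : (size a <= 3)%N -> (size b <= 3)%N ->
  ieq (ibar M (conv (mu_at a) (zeta_at b)))
      (conv (mu_at (recip_poly 2 a)) (zeta_at (recip_poly 2 b))).
Proof.
move=> size_a size_b F H le_FH; rewrite /ibar !conv_mu_zetaE raddf_sum.
apply: eq_bigr => G /andP[le_FG le_GH] /=; rewrite linearZ /=.
have -> : rho M F H = (rr F G * 2 + rr G H * 2)%N.
  by rewrite /rho -(rr_add le_FG le_GH); lia.
by rewrite recip_mul ?size_exp_leq // !recip_exp.
Qed.

Lemma size_conv_mu_zeta n (a b : {poly int}) F H :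
  (size a <= n.+1)%N -> (size b <= n.+1)%N ->
  (size (conv (mu_at a) (zeta_at b) F H) <= (n * rr F H).+1)%N.
Proof.
move=> size_a size_b; rewrite conv_mu_zetaE.
apply: (leq_trans (size_sum _ _ _)); apply/bigmax_leqP => G /andP[le_FG le_GH].
apply: leq_trans (size_scale_leq _ _) _; apply: leq_trans (size_polyMleq _ _) _.
have := size_exp_leq (rr F G) size_a; have := size_exp_leq (rr G H) size_b.
by rewrite -(rr_add le_FG le_GH); lia.
Qed.

Lemma conv_mu_zeta_diag a b F : is_flat M F -> conv (mu_at a) (zeta_at b) F F = 1.
Proof.
by move=> hF; rewrite conv_diag // /mu_at /zeta_at /scale_rank rrxx /mu mobiusxx !mul1r.
Qed.

Lemma left_KLS_unique (k g g' : incid T) : (forall F, is_flat M F -> k F F = 1) ->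
  in_Ihalf M g -> in_Ihalf M g' ->
  ieq (ibar M g) (conv g k) -> ieq (ibar M g') (conv g' k) -> ieq g g'.
Proof.
move=> k1 [_ g1 small_g] [_ g'1 small_g'] KLS_g KLS_g'.
apply: flat_interval_ind => F H le_FH IH; have hH := flat_le_flatr le_FH.
have [<- | nFH] := eqVneq F H; first by rewrite g1 ?g'1 // (flat_le_flatl le_FH).
apply/eqP; rewrite -subr_eq0; apply/eqP; apply: (self_recip_eq0 (r := rr F H)).
  apply: leq_trans (size_polyD _ _) _.
  by rewrite size_polyN geq_max small_g ?small_g'.
rewrite raddfB /=; change (ibar M g F H - ibar M g' F H = g F H - g' F H).
have inH : le F H && le H H by rewrite le_FH flat_le_refl.
rewrite KLS_g ?KLS_g' // /Defs.conv (bigD1 H inH) [X in _ - X](bigD1 H inH) /=.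
rewrite k1 // !mulr1 opprD addrACA -sumrB big1 ?addr0 //.
move=> G /andP[/andP[le_FG le_GH] nGH].
by rewrite IH ?flat_le_refl ?(flat_le_flatl le_FH) ?nGH ?orbT // subrr.
Qed.

Lemma chi_eq : chi M =2 conv (mu_at 1) (zeta_at 'X).
Proof.
move=> F H; rewrite conv_mu_zetaE; apply: eq_bigr => G _.
by rewrite expr1n mul1r intz.
Qed.

Lemma size_chi F H : (size (chi M F H) <= (rr F H).+1)%N.
Proof. by rewrite chi_eq -[rr F H]mul1n size_conv_mu_zeta ?size_poly1 ?size_polyX. Qed.

Lemma chi_at1 F H : le F H -> F != H -> (chi M F H).[1] = 0.
Proof.
move=> le_FH nFH; rewrite /chi horner_sum.
under eq_bigr do rewrite hornerZ hornerXn expr1n mulr1.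
by rewrite -rmorph_sum /= sum_mobius // (negbTE nFH).
Qed.

Lemma hbc_eq : ieq (hbc M) (conv (mu_at (- 'X)) (zeta_at (1 - 'X))).
Proof.
move=> F H le_FH; rewrite conv_mu_zetaE /hbc /chi.
rewrite [homog_one_minus_inv _ _]raddf_sum scaler_sumr.
apply: eq_bigr => G /andP[le_FG le_GH] /=; rewrite linearZ /= homog_Xn; last first.
  by rewrite -(rr_add le_FG le_GH) leq_addl.
by rewrite -(rr_add le_FG le_GH) addnK intz scalerA mulrC -scalerA sign_XsubC_exp.
Qed.

Lemma signed_chi_at_N1 :
  ieq (fun F G => ((-1) ^+ rr F G * (chi M F G).[-1])%:P)
      (conv (mu_at (-1)) (zeta_at 1)).
Proof.
move=> F H le_FH; rewrite conv_mu_zetaE /chi horner_sum mulr_sumr rmorph_sum.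
apply: eq_bigr => G /andP[le_FG le_GH]; rewrite hornerZ hornerXn intz expr1n mulr1.
rewrite -(rr_add le_FG le_GH) exprD mulrACA -expr2 -exprM mulnC exprM sqrrN expr1n.
by rewrite mulr1 mulrC -mul_polyC rmorphM rmorphXn rmorphN1.
Qed.

Lemma kappa_eq : ieq (kappa_mat M) (conv (mu_at (1 - 'X)) (zeta_at ('X * ('X - 1)))).
Proof.
move=> F H le_FH.
have -> : kappa_mat M F H = scale_rank ('X - 1)
    (conv (fun F G => ((-1) ^+ rr F G * (chi M F G).[-1])%:P) (chi M)) F H.
  by congr (_ * _); apply: eq_bigr => G _; rewrite mul_polyC.
rewrite /scale_rank (conv_ieq signed_chi_at_N1 (fun F G _ => chi_eq F G)).
rewrite conv_mu_zeta_cancel // -[LHS]/(scale_rank _ _ F H) -conv_scale_rank //.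
apply: conv_ieq => G1 G2 _; rewrite scale_rankM; congr (scale_rank _ _ _ _); ring.
Qed.

Lemma ibar_kappa :
  ieq (ibar M (kappa_mat M)) (conv (mu_at ('X * ('X - 1))) (zeta_at (1 - 'X))).
Proof.
move=> F H le_FH; rewrite (ibar_ieq kappa_eq) // ibar_conv_mu_zeta ?size_XXsub1 //.
  by rewrite recip2_1subX recip2_XXsub1.
exact: leq_trans size_1subX _.
Qed.

Lemma ibar_hbc : ieq (ibar M (hbc M)) (conv (mu_at (- 'X)) (zeta_at ('X * ('X - 1)))).
Proof.
move=> F H le_FH; rewrite (ibar_ieq hbc_eq) // ibar_conv_mu_zeta //.
- by rewrite recip2_NX recip2_1subX.
- exact: leq_trans size_NX _.
- exact: leq_trans size_1subX _.
Qed.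

Lemma kappa_kernel : is_kernel M (kappa_mat M).
Proof.
split=> [F H le_FH | F hF | F H le_FH | F H le_FH].
- by rewrite kappa_eq // size_conv_mu_zeta ?size_XXsub1 ?(leq_trans size_1subX).
- by rewrite kappa_eq ?flat_le_refl ?conv_mu_zeta_diag.
- by rewrite (conv_ieq kappa_eq ibar_kappa) conv_mu_zeta_cancel ?mu_zeta_at.
- by rewrite (conv_ieq ibar_kappa kappa_eq) conv_mu_zeta_cancel ?mu_zeta_at.
Qed.

Lemma hbc_Ihalf : in_Ihalf M (hbc M).
Proof.
have size_hbc F H : le F H -> (size (hbc M F H) <= (rr F H).+1)%N.
  move=> le_FH; rewrite hbc_eq // -[rr F H]mul1n.
  by rewrite size_conv_mu_zeta ?size_NX ?size_1subX.
split=> [F H le_FH | F hF | F H le_FH nFH].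
- by apply: leq_trans (size_hbc F H le_FH) _; rewrite ltnS /rho leq_pmull.
- by rewrite hbc_eq ?flat_le_refl ?conv_mu_zeta_diag.
- apply: size_le_coef (size_hbc F H le_FH) _.
  by rewrite coefZ coef_homog_top ?size_chi // chi_at1 // mulr0.
Qed.

Lemma hbc_KLS_eq : ieq (ibar M (hbc M)) (conv (hbc M) (kappa_mat M)).
Proof.
move=> F H le_FH.
by rewrite ibar_hbc // (conv_ieq hbc_eq kappa_eq) conv_mu_zeta_cancel.
Qed.

End FlatLattice.

Theorem proposition2p17 (T : finType) (M : matroid T) :
  is_kernel M (kappa_mat M) /\ is_left_KLS M (kappa_mat M) (hbc M).
Proof.
have kernel := kappa_kernel M; case: (kernel) => _ kappa1 _ _.
split=> //; split=> [||g Ihalf_g KLS_g]; [exact: hbc_Ihalf | exact: hbc_KLS_eq |].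
exact: left_KLS_unique kappa1 Ihalf_g (hbc_Ihalf M) KLS_g (@hbc_KLS_eq _ M).
Qed.
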